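(* Let $G=(\mathcal V,\mathcal E)$ satisfy the Neighborhood Overlap property with parameter $p\in(0,1]$. Let $\{X_t\}_{t\in\mathbb N}$ be the trajectory generated under the Water-Filling Strategy $\psi^{wf}$ on $G$, let $N_t=\sum_{i=1}^t\mathbb I(X_i\in\mathcal N(D))$, $U_0=0$, $U_i=\sup\{t\ge1:N_t<i\}$ and $Y_i=U_i-U_{i-1}$ for $i\ge1$. Then $\mathbb E(Y_i)\le1/p$ for every $i\ge1$.
   Context: Model: finite connected undirected graph, neighborhoods $\mathcal N(v)$; goal $D$ uniform on $\mathcal V$; $B_t$ i.i.d. Bernoulli$(1-\varepsilon)$, $\varepsilon\in[0,1)$. The agent in state $X_t$ chooses $a_t\in\mathcal N(X_t)$; if $B_t=1$, $X_{t+1}=a_t$, else $X_{t+1}$ uniform on $\mathcal N(X_t)$. Random-Step: $a_t$ uniform on $\mathcal N(X_t)$; Goal-Attempt: $a_t=D$. $T_{IH}=\inf\{t\ge1:$ Goal-Attempt at $t-1$ and $B_{t-1}=1\}$. Water-Filling Strategy with target risk $\bar q$: $t^*=\lceil1/\bar q-\varepsilon/(1-\varepsilon)\rceil$, $p_t=\frac{\bar q}{1-\varepsilon}(1-t\bar q)^{-1}$ for $0\le t<t^*-1$, else $1$; if $X_t\in\mathcal N(D)$ and $T_{IH}>t$, Goal-Attempt with probability $p_{N_t}$, else Random-Step; otherwise Random-Step. Neighborhood Overlap property with parameter $p$: for all $u,v$, $|\mathcal N(u)\cap\mathcal N(v)|/|\mathcal N(v)|\ge p$. *)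

From HB Require Import structures.
From mathcomp Require Import all_boot all_order all_algebra.
From mathcomp Require Import all_classical all_reals all_analysis.
Set Implicit Arguments. Unset Strict Implicit. Unset Printing Implicit Defensive.
Import Order.TTheory GRing.Theory Num.Theory.
Local Open Scope ring_scope.

Definition nbhd_adj (V : finType) (N : V -> {set V}) : rel V :=
  fun u v => v \in N u.

Definition neighborhood_overlap (R : realType) (V : finType)
  (N : V -> {set V}) (p : R) : Prop :=
  forall u v : V, p <= #|N u :&: N v|%:R / #|N v|%:R.

Definition wf_tstar (R : realType) (qbar eps : R) : int :=
  Num.ceil (qbar^-1 - eps / (1 - eps)).

Definition wf_p (R : realType) (qbar eps : R) (t : nat) : R :=
  if (t%:Z + 1 < wf_tstar qbar eps)%R
  then qbar / (1 - eps) * (1 - t%:R * qbar)^-1 else 1.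

Definition nvisits (V : finType) (N : V -> {set V}) (x : nat -> V) (d : V)
  (t : nat) : nat :=
  (\sum_(1 <= i < t.+1) (x i \in N d))%N.

(* T_IH > t  iff  no s < t with a Goal-Attempt at s and B_s = 1. *)
Definition not_home (a b : nat -> bool) (t : nat) : bool :=
  ~~ [exists s : 'I_t, a s && b s].

(* Probability weight of one transition t -> t+1 of the (D, X, A, B) process
   under the Water-Filling Strategy: A_t = Goal-Attempt indicator,
   B_t ~ Bernoulli(1-eps), X_{t+1} = D if A_t && B_t, else uniform on N(X_t). *)
Definition wf_step_weight (R : realType) (V : finType) (N : V -> {set V})
  (eps qbar : R) (d : V) (x : nat -> V) (a b : nat -> bool) (t : nat) : R :=
  let wA := if (x t \in N d) && not_home a b t
            then (if a t then wf_p qbar eps (nvisits N x d t)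
                  else 1 - wf_p qbar eps (nvisits N x d t))
            else (if a t then 0 else 1) in
  let wB := if b t then 1 - eps else eps in
  let wX := if a t && b t then (x t.+1 == d)%:R
            else (x t.+1 \in N (x t))%:R / #|N (x t)|%:R in
  wA * wB * wX.

(* Probability that D = d, X_0..X_n = x_0..x_n, A_t = a_t, B_t = b_t (t < n),
   with D uniform on V and X_0 = x0. *)
Definition wf_path_weight (R : realType) (V : finType) (N : V -> {set V})
  (eps qbar : R) (x0 : V) (d : V) (x : nat -> V) (a b : nat -> bool)
  (n : nat) : R :=
  #|V|%:R^-1 * (x 0 == x0)%:R * \prod_(t < n) wf_step_weight N eps qbar d x a b t.

Local Open Scope ereal_scope.

(* U_0 = 0, U_i = sup{t >= 1 : N_t < i} (with sup of the empty set := 0,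
   realized by also allowing t = 0, where N_0 = 0 < i). *)
Definition wf_U (R : realType) (V : finType) (N : V -> {set V})
  (x : nat -> V) (d : V) (i : nat) : \bar R :=
  if i == 0%N then 0
  else ereal_sup [set (t%:R)%:E | t in [set t : nat | (nvisits N x d t < i)%N]].

(* Y_i = U_i - U_{i-1}; convention (+oo) - (+oo) := +oo. *)
Definition wf_Y (R : realType) (V : finType) (N : V -> {set V})
  (x : nat -> V) (d : V) (i : nat) : \bar R :=
  if wf_U R N x d i.-1 == +oo then +oo
  else wf_U R N x d i - wf_U R N x d i.-1.

(* From any history up to time s the walker leaves N(D) at time s + 1 with
   probability at most 1 - p: a successful goal attempt lands on D, which lies in
   N(D), and a random step from u leaves N(D) with probability
   |N(u) \ N(D)| / |N(u)| <= 1 - p by Neighborhood Overlap.  Hence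
   P(N_(s+1) <= k) <= P(N_s <= k) - p P(N_s = k), and telescoping gives
   sum_s P(N_s = k) <= 1/p; in particular N_s is almost surely unbounded.  Since
   Y_i is at most the number of times s with N_s = i - 1, E(Y_i) <= 1/p. *)

From HB Require Import structures.
From mathcomp Require Import all_boot all_order all_algebra.
From mathcomp Require Import all_classical all_reals all_analysis.
From mathcomp Require Import measurable_realfun lra.
Import Order.TTheory GRing.Theory Num.Theory.
Local Open Scope ring_scope.
Local Open Scope classical_set_scope.

Lemma eq_ffun_ordP {T : Type} {n} (f g : nat -> T) :
  [ffun t : 'I_n => f t] = [ffun t : 'I_n => g t] <-> forall t, (t < n)%N -> f t = g t.
Proof.
split=> [/ffunP fg t tn | fg]; last by apply/ffunP => t; rewrite !ffunE fg.
by have := fg (Ordinal tn); rewrite !ffunE.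
Qed.

Section visits.
Variables (V : finType) (N : V -> {set V}).
Implicit Types (x y : nat -> V) (d : V).

Lemma nvisits0 x d : nvisits N x d 0 = 0%N.
Proof. by rewrite /nvisits big_geq. Qed.

Lemma nvisitsS x d t :
  nvisits N x d t.+1 = (nvisits N x d t + (x t.+1 \in N d))%N.
Proof. by rewrite /nvisits big_nat_recr. Qed.

Lemma le_nvisits x d : {homo nvisits N x d : m n / (m <= n)%N}.
Proof.
by apply: homo_leq => [//||t]; [exact: leq_trans | rewrite nvisitsS leq_addr].
Qed.

Lemma eq_nvisits x y d t : (forall s, (s <= t)%N -> x s = y s) ->
  nvisits N x d t = nvisits N y d t.
Proof. by move=> xy; apply: eq_big_nat => s /andP[_ st]; rewrite xy. Qed.

End visits.

Section interarrival.
Variables (R : realType) (V : finType) (N : V -> {set V}) (x : nat -> V) (d : V).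
Local Notation nv := (nvisits N x d).
Local Open Scope ereal_scope.

Lemma eseries_ge1 (g : nat -> \bar R) :
  (forall s, 1 <= g s) -> \sum_(s <oo) g s = +oo.
Proof.
move=> g1; apply/eqP; rewrite eq_le leey /=.
have -> : +oo = \sum_(s <oo) (1 : \bar R).
  apply/esym/cvg_lim => //.
  rewrite (_ : (fun n => _) = fun n => (n%:R)%:E); last first.
    by apply/funext => n; rewrite sumEFin sumr_const_nat subn0.
  exact/cvgenyP.
by apply: lee_nneseries => // s _ _.
Qed.

Lemma wf_U_fin_num j : (exists s, (j <= nv s)%N) ->
  exists u : R, [/\ wf_U R N x d j = u%:E, (0 <= u)%R &
                    forall t, (nv t < j)%N -> (t%:R <= u)%R].
Proof.
move=> [s js]; rewrite /wf_U; case: eqP => [->|/eqP j_neq0]; first by exists 0%R.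
set S := [set _ | _ in _].
have S_le : ereal_sup S <= s%:R%:E.
  apply: ge_ereal_sup => _ [t /= tj <-]; rewrite lee_fin ler_nat leqNgt.
  by apply: contraTN tj => /ltnW/(@le_nvisits _ N x d); rewrite -leqNgt; apply: leq_trans.
have S_ge0 : 0 <= ereal_sup S.
  by apply: ereal_sup_ubound; exists 0%N; rewrite //= nvisits0 lt0n.
have S_fin : ereal_sup S \is a fin_num.
  by rewrite ge0_fin_numE // (le_lt_trans S_le) ?ltry.
exists (fine (ereal_sup S)); split; first by rewrite fineK.
  by rewrite -lee_fin fineK.
by move=> t tj; rewrite -lee_fin fineK //; apply: ereal_sup_ubound; exists t.
Qed.

Lemma wf_Y_le_count i : (0 < i)%N -> (exists s, (i.-1 <= nv s)%N) ->
  wf_Y R N x d i <= \sum_(s <oo) ((nv s == i.-1)%:R)%:E.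
Proof.
move=> i_gt0 /wf_U_fin_num[u [Uu u_ge0 Uu_ge]].
rewrite /wf_Y Uu /= EFinN leeBlDr // /wf_U gtn_eqF //.
apply: ge_ereal_sup => _ [k /= ki <-].
pose c m := (\sum_(0 <= s < m) ((nv s == i.-1)%:R : R))%R.
have c_ge0 m : (0 <= c m)%R by apply: sumr_ge0 => s _.
(* The times in (U_(i-1), t] all have N = i - 1. *)
have le_count t : (nv t <= i.-1)%N -> (t%:R <= c t.+1 + u)%R.
  elim: t => [|t IH] t_le; first by rewrite addr_ge0.
  rewrite /c big_nat_recr //= -/(c t.+1).
  move: t_le; rewrite leq_eqVlt => /predU1P[t_eq|t_lt]; rewrite ?t_eq ?eqxx.
    rewrite -natr1 addrAC lerD2r IH // (leq_trans _ (eq_leq t_eq)) //.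
    exact: le_nvisits.
  by rewrite (le_trans (Uu_ge _ t_lt)) // lerDr addr_ge0.
apply: le_trans (_ : (c k.+1)%:E + u%:E <= _).
  by rewrite -EFinD lee_fin le_count // -ltnS prednK.
rewrite leeD2r // /c -sumEFin.
by apply: nneseries_lim_ge => s _ _.
Qed.

End interarrival.

Section fibers.
Context {d : measure_display} {T : measurableType d} {R : realType}.
Variable mu : {measure set T -> \bar R}.
Local Open Scope ereal_scope.

Lemma measurable_preimage_fin {I : finType} (f : T -> I) (S : set I) :
  (forall i, measurable (f @^-1` [set i])) -> measurable (f @^-1` S).
Proof.
move=> mf; have -> : f @^-1` S = \bigcup_(i in S) f @^-1` [set i].
  by apply/seteqP; split=> [w Sw | w [i Si /= ->]] //; exists (f w).
by apply: fin_bigcup_measurable => [|i _]; [exact: finite_finset | exact: mf].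
Qed.

Lemma measure_fibers {I : finType} (f : T -> I) (E : set T) :
  (forall i, measurable (f @^-1` [set i])) -> measurable E ->
  mu E = \sum_i mu (E `&` f @^-1` [set i]).
Proof.
move=> mf mE; rewrite (eq_bigl (mem predT)) // big_enum_val -measure_bigsetU_ord //.
- congr (mu _); rewrite -bigcup_seq; apply/seteqP; split=> [w Ew|w [j _ []//]].
  by exists (enum_rank (f w)); rewrite /= ?mem_index_enum ?enum_rankK.
- by move=> j; apply: measurableI.
- move=> j k _ _ [w [[_ fj] [_ fk]]]; apply: enum_val_inj.
  by rewrite -fj -fk.
Qed.

(* [f] need not be measurable. *)
Lemma le_integral_ge0_bound (g : T -> \bar R) (f : T -> \bar R) :
  (forall w, 0 <= g w) -> (forall w, f w <= g w) ->
  \int[mu]_w f w <= \int[mu]_w g w.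
Proof.
move=> g0 fg; rewrite integralE -[leRHS]sube0; apply: leeB; last first.
  by apply: integral_ge0 => w _; exact: funeneg_ge0.
rewrite (ge0_integralTE _ (f := f^\+)); last by move=> w; exact: funepos_ge0.
rewrite (ge0_integralTE _ (f := g)) //.
apply: le_ereal_sup => _ [h hf <-]; exists h => // w.
by rewrite (le_trans (hf w)) // funeposE ge_max fg g0.
Qed.

End fibers.

Section probability_fine.
Context {d : measure_display} {T : measurableType d} {R : realType}.
Variable P : probability T R.
Local Notation pr E := (fine (P E)).
Local Open Scope ereal_scope.

Lemma prE {E} : measurable E -> P E = (pr E)%:E.
Proof. by move=> mE; rewrite fineK // fin_num_measure. Qed.

Lemma pr_ge0 E : (0 <= pr E)%R.
Proof. exact: fine_ge0. Qed.

Lemma pr_le1 {E} : measurable E -> (pr E <= 1)%R.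
Proof. by move=> mE; rewrite -lee_fin -prE // probability_le1. Qed.

Lemma prU {E F} : measurable E -> measurable F -> E `&` F = set0 ->
  pr (E `|` F) = (pr E + pr F)%R.
Proof.
by move=> mE mF EF; rewrite (measureU P mE mF EF) fineD ?fin_num_measure.
Qed.

Lemma pr_le {E F} : measurable E -> measurable F -> E `<=` F -> (pr E <= pr F)%R.
Proof. by move=> mE mF EF; rewrite -lee_fin -!prE // le_measure ?inE. Qed.

End probability_fine.

Section water_filling_step.
Variables (R : realType) (V : finType) (N : V -> {set V}) (p eps qbar : R) (x0 : V).
Hypotheses (eps01 : 0 <= eps < 1) (qbar_gt0 : 0 < qbar).

Lemma wf_p_ge0 t : 0 <= wf_p qbar eps t.
Proof.
rewrite /wf_p; case: ifP => // /[!(ceil_gt_int, intrD)] t_lt.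
have [eps_ge0 eps_lt1] := andP eps01.
rewrite mulr_ge0 ?divr_ge0 ?subr_ge0 ?ltW // invr_gt0 subr_gt0.
have : (t%:R + 1) * qbar < 1.
  rewrite -ltr_pdivlMr // div1r (lt_le_trans t_lt) // lerBlDr lerDl.
  by rewrite divr_ge0 // subr_ge0 ltW.
by apply: le_lt_trans; rewrite ler_wpM2r ?ltW ?ltrDl.
Qed.

Lemma eq_wf_step_weight d x y a a' b b' t :
  (forall k, (k <= t.+1)%N -> x k = y k) ->
  (forall k, (k <= t)%N -> a k = a' k /\ b k = b' k) ->
  wf_step_weight N eps qbar d x a b t = wf_step_weight N eps qbar d y a' b' t.
Proof.
move=> xy ab.
have nh : not_home a b t = not_home a' b' t.
  by congr (~~ _); apply: eq_existsb => k; have [-> ->] := ab k (ltnW (ltn_ord k)).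
rewrite /wf_step_weight nh (@eq_nvisits _ _ x y) => [|k kt]; last by rewrite xy ?leqW.
by rewrite !xy //; have [-> ->] := ab t (leqnn t).
Qed.

Lemma wf_path_weightS d x a b s v c c' :
  let x' := [eta x with s.+1 |-> v] in
  let a' := [eta a with s |-> c] in
  let b' := [eta b with s |-> c'] in
  wf_path_weight N eps qbar x0 d x' a' b' s.+1 =
  wf_path_weight N eps qbar x0 d x a b s * wf_step_weight N eps qbar d x' a' b' s.
Proof.
rewrite /wf_path_weight big_ord_recr /= mulrA; congr (_ * _ * _ * _).
apply: eq_bigr => t _; apply: eq_wf_step_weight => k kt /=.
  by rewrite ltn_eqF // ltnS (leq_trans kt (ltn_ord t)).
by rewrite ltn_eqF // (leq_ltn_trans kt (ltn_ord t)).
Qed.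

Hypotheses (N_refl : forall v, v \in N v) (overlap : neighborhood_overlap N p).

Lemma uniform_nbhd_exit_le d u :
  \sum_(v | v \notin N d) ((v \in N u)%:R / #|N u|%:R : R) <= 1 - p.
Proof.
have Nu_neq0 : #|N u|%:R != 0 :> R by rewrite pnatr_eq0 -lt0n; apply/card_gt0P; exists u.
rewrite -mulr_suml (eq_bigr (fun v => if v \in N u then 1 else 0)) => [|v _]; last first.
  by case: ifP.
rewrite -big_mkcondr /= sumr_const.
have -> : #|[pred v | (v \notin N d) && (v \in N u)]| = #|N u :\: N d|.
  by apply: eq_card => v; rewrite !inE.
have -> : (#|N u :\: N d|%:R : R) = #|N u|%:R - #|N d :&: N u|%:R.
  by rewrite -(cardsID (N d) (N u)) natrD finset.setIC addrAC subrr add0r.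
by rewrite mulrBl divff // lerD2l lerN2; apply: overlap.
Qed.

Lemma wf_step_exit_le d x a b s :
  \sum_(e : bool * bool * V | e.2 \notin N d)
     wf_step_weight N eps qbar d [eta x with s.+1 |-> e.2]
       [eta a with s |-> e.1.1] [eta b with s |-> e.1.2] s <= 1 - p.
Proof.
set u := x s; set pi := wf_p qbar eps (nvisits N x d s).
set attempt := (u \in N d) && not_home a b s.
pose wA c := if attempt then (if c then pi else 1 - pi) else (if c then 0 else 1).
pose wB c := if c then 1 - eps else eps.
pose F c c' v :=
  wA c * wB c' * (if c && c' then (v == d)%:R else (v \in N u)%:R / #|N u|%:R).
have step_weightE c c' v : wf_step_weight N eps qbar d [eta x with s.+1 |-> v]
    [eta a with s |-> c] [eta b with s |-> c'] s = F c c' v.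
  rewrite /wf_step_weight /= (@eq_nvisits _ _ _ x) => [|t ts]; last first.
    by rewrite /= ltn_eqF // ltnS.
  have -> : not_home [eta a with s |-> c] [eta b with s |-> c'] s = not_home a b s.
    by congr (~~ _); apply: eq_existsb => k /=; rewrite !ltn_eqF.
  by rewrite (ltn_eqF (ltnSn s)) !eqxx.
under eq_bigr do rewrite step_weightE.
rewrite -(pair_big_dep xpredT (fun _ v => v \notin N d) (fun c v => F c.1 c.2 v)) /=.
pose r := \sum_(v | v \notin N d) ((v \in N u)%:R / #|N u|%:R : R).
(* A successful goal attempt lands on [d \in N d], so only random steps can exit. *)
have sum_exit c c' :
    \sum_(v | v \notin N d) F c c' v = wA c * wB c' * (if c && c' then 0 else r).
  rewrite -mulr_sumr; case: (c && c') => //; congr (_ * _); apply: big1 => v.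
  by case: eqP => // ->; rewrite N_refl.
under eq_bigr do rewrite sum_exit.
rewrite -(pair_big xpredT xpredT (fun c c' => wA c * wB c' * (if c && c' then 0 else r))).
rewrite /= !big_bool /= /wA /wB.
have [r_ge0 r_le] : 0 <= r /\ r <= 1 - p.
  by split; [apply: sumr_ge0 => v _; apply: divr_ge0 | apply: uniform_nbhd_exit_le].
have pi_ge0 : 0 <= pi by apply: wf_p_ge0.
have [eps_ge0 eps_lt1] := andP eps01.
(* The exit mass is [r], or [r * (1 - pi * (1 - eps))] when an attempt is possible. *)
have : 0 <= pi * r * (1 - eps) by rewrite !mulr_ge0 // subr_ge0 ltW.
by clearbody wA; case: attempt; lra.
Qed.

End water_filling_step.

Section water_filling_process.
Variables (R : realType) (V : finType) (N : V -> {set V}) (p eps qbar : R) (x0 : V).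
Variables (dO : measure_display) (O : measurableType dO) (P : probability O R).
Variables (D : O -> V) (X : nat -> O -> V) (A B : nat -> O -> bool).
Hypotheses (mD : forall v, measurable (D @^-1` [set v]))
  (mX : forall t v, measurable (X t @^-1` [set v]))
  (mA : forall t c, measurable (A t @^-1` [set c]))
  (mB : forall t c, measurable (B t @^-1` [set c])).

Definition cyl n d (x : nat -> V) (a b : nat -> bool) : set O :=
  [set w : O | D w = d /\ (forall t, (t <= n)%N -> X t w = x t) /\
                (forall t, (t < n)%N -> A t w = a t /\ B t w = b t)].

Lemma measurable_cyl n d x a b : measurable (cyl n d x a b).
Proof.
have -> : cyl n d x a b = D @^-1` [set d] `&`
    (\bigcap_(t in [set t | (t <= n)%N]) X t @^-1` [set x t] `&`
     \bigcap_(t in [set t | (t < n)%N]) (A t @^-1` [set a t] `&` B t @^-1` [set b t])).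
  by apply/seteqP; split=> w /= [dw [xw abw]].
apply: measurableI => //; apply: measurableI; apply: bigcap_measurableType => t _ //.
exact: measurableI.
Qed.

(* Conditioning on the past up to time n amounts to summing over the finitely
   many values of [history n], whose fibers are the cylinders [cyl n]. *)
Definition hist n :=
  (V * {ffun 'I_n.+1 -> V} * {ffun 'I_n -> bool} * {ffun 'I_n -> bool})%type.

Definition hist_of n (d : V) (x : nat -> V) (a b : nat -> bool) : hist n :=
  (d, [ffun t : 'I_n.+1 => x t], [ffun t : 'I_n => a t], [ffun t : 'I_n => b t]).

Definition history n w : hist n := hist_of n (D w) (X^~ w) (A^~ w) (B^~ w).

Lemma cylE n d x a b : cyl n d x a b = history n @^-1` [set hist_of n d x a b].
Proof.
rewrite /history /hist_of; apply/seteqP; split=> w /=.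
  move=> [-> [xw abw]]; congr (_, _, _, _).
  - exact/(eq_ffun_ordP (X^~ w)).
  - by apply/(eq_ffun_ordP (A^~ w)) => t /abw[].
  - by apply/(eq_ffun_ordP (B^~ w)) => t /abw[].
move=> [= dw /(eq_ffun_ordP (X^~ w)) xw].
move=> /(eq_ffun_ordP (A^~ w)) aw /(eq_ffun_ordP (B^~ w)) bw.
by split=> //; split=> // t tn; split; [apply: aw | apply: bw].
Qed.

Lemma hist_of_surj {n} (h : hist n) : exists d x a b, h = hist_of n d x a b.
Proof.
case: h => [[[d x] a] b]; pose ext T m (f : {ffun 'I_m -> T}) t0 t := oapp f t0 (insub t).
exists d, (ext _ _ x d), (ext _ _ a false), (ext _ _ b false).
by congr (_, _, _, _); apply/ffunP => t; rewrite ffunE /ext valK.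
Qed.

Lemma measurable_history {n} (S : set (hist n)) : measurable (history n @^-1` S).
Proof.
apply: measurable_preimage_fin => h.
by have [d [x [a [b ->]]]] := hist_of_surj h; rewrite -cylE; apply: measurable_cyl.
Qed.

Definition next_move s w : bool * bool * V := (A s w, B s w, X s.+1 w).

Lemma measurable_next_move s e : measurable (next_move s @^-1` [set e]).
Proof.
have -> : next_move s @^-1` [set e] =
    A s @^-1` [set e.1.1] `&` B s @^-1` [set e.1.2] `&` X s.+1 @^-1` [set e.2].
  apply/seteqP; split=> [w /= <-| w [[/= aw bw] xw]] //.
  by case: e aw bw xw => [[c c'] v] /= <- <- <-.
by apply: measurableI => //; apply: measurableI.
Qed.

Lemma cyl_next_move s d x a b c c' v :
  cyl s d x a b `&` next_move s @^-1` [set (c, c', v)] =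
  cyl s.+1 d [eta x with s.+1 |-> v] [eta a with s |-> c] [eta b with s |-> c'].
Proof.
apply/seteqP; split=> w /=.
  move=> [[dw [xw abw]] [= <- <- <-]]; split=> //; split=> t /=.
    have [-> //|ts ts1] := eqVneq t s.+1; apply: xw.
    by rewrite -ltnS ltn_neqAle ts ts1.
  have [-> //|ts ts1] := eqVneq t s; apply: abw.
  by rewrite ltn_neqAle ts -ltnS ts1.
move=> [dw [xw abw]]; split; first split=> //; first split=> t ts.
- by have := xw t (leqW ts); rewrite /= ltn_eqF.
- by have := abw t (ltnW ts); rewrite /= ltn_eqF.
have := xw s.+1 (leqnn _); have := abw s (ltnSn s).
by rewrite /= !eqxx /next_move => -[-> ->] ->.
Qed.

Hypotheses (eps01 : 0 <= eps < 1) (qbar_gt0 : 0 < qbar).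
Hypotheses (N_refl : forall v, v \in N v) (overlap : neighborhood_overlap N p).
Hypothesis p01 : 0 < p <= 1.
Hypothesis P_cyl : forall n d x a b,
  P (cyl n d x a b) = (wf_path_weight N eps qbar x0 d x a b n)%:E.

Definition exit_nbhd s := [set w | X s.+1 w \notin N (D w)].

Lemma measurable_exit_nbhd s : measurable (exit_nbhd s).
Proof.
pose f w := (D w, X s.+1 w).
have -> : exit_nbhd s = f @^-1` [set u | u.2 \notin N u.1] by [].
apply: measurable_preimage_fin => -[d v].
have -> : f @^-1` [set (d, v)] = D @^-1` [set d] `&` X s.+1 @^-1` [set v].
  by apply/seteqP; split=> w; rewrite /preimage /f /=; [case=> -> -> | case=> -> ->].
exact: measurableI.
Qed.

Local Open Scope ereal_scope.

Lemma cyl_exit_le s d x a b :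
  P (cyl s d x a b `&` exit_nbhd s) <= (1 - p)%:E * P (cyl s d x a b).
Proof.
have m_cyl_exit : measurable (cyl s d x a b `&` exit_nbhd s).
  exact: measurableI (measurable_cyl _ _ _ _ _) (measurable_exit_nbhd s).
rewrite (measure_fibers P (next_move s) _ (measurable_next_move s) m_cyl_exit).
rewrite (bigID (fun e => e.2 \notin N d)) /= [X in _ + X]big1 ?adde0; last first.
  move=> [[c c'] v] /= vN; rewrite -[RHS](measure0 P); congr (P _).
  apply/seteqP; split=> // w [[[dw _] exw] [= _ _ xw]].
  by move: exw; rewrite /exit_nbhd /= dw xw; apply/negP.
have W_ge0 : (0 <= wf_path_weight N eps qbar x0 d x a b s)%R.
  by rewrite -lee_fin -P_cyl measure_ge0.
rewrite (eq_bigr (fun e => (wf_path_weight N eps qbar x0 d x a b s *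
    wf_step_weight N eps qbar d [eta x with s.+1 |-> e.2]
      [eta a with s |-> e.1.1] [eta b with s |-> e.1.2] s)%:E)); last first.
  move=> [[c c'] v] /= vN; rewrite -wf_path_weightS -P_cyl -cyl_next_move.
  congr (P _); apply/seteqP; split=> w [cw ew]; first by case: cw.
  split=> //; split=> //; case: cw ew => dw _ [= _ _ xw].
  by rewrite /exit_nbhd /= dw xw.
rewrite sumEFin -mulr_sumr P_cyl -EFinM lee_fin mulrC ler_wpM2r //.
exact: wf_step_exit_le.
Qed.

Lemma history_exit_le s (S : set (hist s)) :
  P (history s @^-1` S `&` exit_nbhd s) <= (1 - p)%:E * P (history s @^-1` S).
Proof.
have m_fiber h : measurable (history s @^-1` [set h]) := measurable_history _.
have mS := measurable_history S.
have mS_exit := measurableI _ _ mS (measurable_exit_nbhd s).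
rewrite (measure_fibers P (history s) _ m_fiber mS_exit).
rewrite (measure_fibers P (history s) _ m_fiber mS) ge0_sume_distrr => [|h _]; last first.
  exact: measure_ge0.
apply: lee_sum => h _; have [d [x [a [b ->]]]] := hist_of_surj h; rewrite -cylE.
have [Sh|nSh] := pselect (S (hist_of s d x a b)).
  have cylS : cyl s d x a b `<=` history s @^-1` S by rewrite cylE => w /= ->.
  by rewrite setIAC !(setIidr cylS); apply: cyl_exit_le.
have S_cyl0 : history s @^-1` S `&` cyl s d x a b = set0.
  by apply/seteqP; split=> // w []; rewrite cylE /= => Sw wh; apply: nSh; rewrite -wh.
by rewrite setIAC S_cyl0 set0I !measure0 mule0.
Qed.

Definition visits w s := nvisits N (X^~ w) (D w) s.

Lemma visits_event s (Q : pred nat) :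
  [set w | Q (visits w s)] = history s @^-1` (history s @` [set w | Q (visits w s)]).
Proof.
apply/seteqP; split=> [w Qw | w [w' Qw' ww']]; first by exists w.
move: ww' Qw' => [= dw /(eq_ffun_ordP (X^~ w') (X^~ w)) xw _ _].
by rewrite /= /visits dw (@eq_nvisits _ _ (X^~ w') (X^~ w)).
Qed.

Lemma measurable_visits s (Q : pred nat) : measurable [set w | Q (visits w s)].
Proof. by rewrite visits_event; apply: measurable_history. Qed.

Lemma visits_exit_le s (Q : pred nat) :
  P ([set w | Q (visits w s)] `&` exit_nbhd s) <= (1 - p)%:E * P [set w | Q (visits w s)].
Proof. by rewrite visits_event; apply: history_exit_le. Qed.

Local Notation pr E := (fine (P E)).

Lemma visitsS w s : visits w s.+1 = (visits w s + (X s.+1 w \in N (D w)))%N.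
Proof. exact: nvisitsS. Qed.

Definition visits_eq k s := [set w | visits w s == k].
Definition visits_lt k s := [set w | (visits w s < k)%N].

Lemma measurable_visits_eq k s : measurable (visits_eq k s).
Proof. exact: (measurable_visits s (pred1 k)). Qed.

Lemma measurable_visits_lt k s : measurable (visits_lt k s).
Proof. exact: (measurable_visits s (fun n => n < k)%N). Qed.

Lemma visits_ltS k s : visits_lt k.+1 s = visits_lt k s `|` visits_eq k s.
Proof.
apply/seteqP; split=> w; rewrite /visits_lt /visits_eq /=.
  by rewrite ltnS leq_eqVlt => /predU1P[->|]; [right|left].
by case=> [/ltnW|/eqP->].
Qed.

Lemma visits_lt_eq0 k s : visits_lt k s `&` visits_eq k s = set0.
Proof.
apply/seteqP; split=> // w []; rewrite /visits_lt /visits_eq /= => + /eqP kw.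
by rewrite kw ltnn.
Qed.

Lemma visits_telescope k s :
  (pr (visits_lt k.+1 s.+1) + p * pr (visits_eq k s) <= pr (visits_lt k.+1 s))%R.
Proof.
have [m_lt m_eq] := (measurable_visits_lt k s, measurable_visits_eq k s).
have m_exit : measurable (visits_eq k s `&` exit_nbhd s).
  exact: measurableI m_eq (measurable_exit_nbhd s).
have -> : visits_lt k.+1 s.+1 = visits_lt k s `|` (visits_eq k s `&` exit_nbhd s).
  apply/seteqP; split=> w; rewrite /visits_lt /visits_eq /exit_nbhd /= visitsS.
    case: (_ \in _); rewrite ?addn1 ?addn0 ?ltnS; first by left.
    by rewrite leq_eqVlt => /predU1P[->|]; [right|left].
  case: (X s.+1 w \in N (D w)) => [[|[]//]|[/ltnW|[/eqP->]]];
    by rewrite ?addn0 ?addn1 ?ltnS.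
have disj : visits_lt k s `&` (visits_eq k s `&` exit_nbhd s) = set0.
  by rewrite setIA visits_lt_eq0 set0I.
rewrite visits_ltS (prU P m_lt m_exit disj) (prU P m_lt m_eq (visits_lt_eq0 k s)).
have exit_le : P (visits_eq k s `&` exit_nbhd s) <= (1 - p)%:E * P (visits_eq k s).
  exact: (visits_exit_le s (pred1 k)).
rewrite (prE P m_exit) (prE P m_eq) -EFinM lee_fin in exit_le.
lra.
Qed.

Lemma sum_visits_eq_le k M : (\sum_(s < M) pr (visits_eq k s) <= p^-1)%R.
Proof.
have [p_gt0 _] := andP p01.
suff : (pr (visits_lt k.+1 M) + p * \sum_(s < M) pr (visits_eq k s) <= 1)%R.
  move=> telescoped; rewrite -(ler_pM2l p_gt0) mulfV ?gt_eqF //.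
  by have := pr_ge0 P (visits_lt k.+1 M); lra.
elim: M => [|M IH].
  by rewrite big_ord0 mulr0 addr0 (pr_le1 P (measurable_visits_lt _ _)).
by rewrite big_ord_recr /= mulrDr addrA; have := visits_telescope k M; lra.
Qed.

Lemma pr_visits_lt j s : pr (visits_lt j s) = (\sum_(k < j) pr (visits_eq k s))%R.
Proof.
elim: j => [|j IH].
  by rewrite big_ord0 (_ : visits_lt 0 s = set0) ?measure0 //; apply/seteqP; split.
rewrite visits_ltS (prU P (measurable_visits_lt j s) (measurable_visits_eq j s)).
  by rewrite IH big_ord_recr.
exact: visits_lt_eq0.
Qed.

Definition visits_bounded j := [set w | forall s, (visits w s < j)%N].

Lemma measurable_visits_bounded j : measurable (visits_bounded j).
Proof.
rewrite (_ : visits_bounded j = \bigcap_s visits_lt j s); last first.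
  by apply/seteqP; split=> [w wj s _|w wj s]; [apply: wj | apply: wj].
by apply: bigcapT_measurable => s; apply: measurable_visits_lt.
Qed.

Lemma visits_bounded_null j : P (visits_bounded j) = 0.
Proof.
have [p_gt0 _] := andP p01.
have mZ := measurable_visits_bounded j.
have bound M : (M%:R * pr (visits_bounded j) <= j%:R / p)%R.
  apply: (@le_trans _ _ (\sum_(s < M) pr (visits_lt j s))%R).
    have -> : (M%:R * pr (visits_bounded j) = \sum_(s < M) pr (visits_bounded j))%R.
      by rewrite sumr_const card_ord mulr_natl.
    by apply: ler_sum => s _; apply: (pr_le P mZ (measurable_visits_lt j s)) => w; apply.
  under eq_bigr do rewrite pr_visits_lt.
  rewrite exchange_big /= (@le_trans _ _ (\sum_(k < j) p^-1)%R) //.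
    by apply: ler_sum => k _; apply: sum_visits_eq_le.
  by rewrite sumr_const card_ord mulr_natl.
rewrite (prE P mZ); congr (_%:E); apply/eqP; rewrite eq_le pr_ge0 andbT.
rewrite leNgt; apply/negP => Z_gt0.
have := archi_boundP (divr_ge0 (divr_ge0 (ler0n _ j) (ltW p_gt0)) (ltW Z_gt0)).
by rewrite ltr_pdivrMr // ltNge bound.
Qed.

Lemma expectation_wf_Y_le i : (0 < i)%N ->
  \int[P]_w wf_Y R N (X^~ w) (D w) i <= p^-1%:E.
Proof.
move=> i_gt0.
(* On the null set [visits_bounded i.-1] we have [U_(i-1) = +oo] and [Y_i = +oo]. *)
pose G s := visits_eq i.-1 s `|` visits_bounded i.-1.
have mG s : measurable (G s).
  exact: measurableU (measurable_visits_eq _ _) (measurable_visits_bounded _).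
have ind_ge0 s w : 0 <= (\1_(G s) w)%:E by rewrite lee_fin.
apply: (le_trans (le_integral_ge0_bound P (fun w => \sum_(s <oo) (\1_(G s) w)%:E) _ _ _)).
- by move=> w; apply: nneseries_ge0.
- move=> w; have [Zw|nZw] := pselect (visits_bounded i.-1 w).
    by rewrite eseries_ge1 ?leey // => s; rewrite indicE mem_set //; right.
  have reach : exists s, (i.-1 <= visits w s)%N.
    by apply: contra_notP nZw => /forallNP reach s; rewrite ltnNge; apply/negP/reach.
  apply: le_trans (@wf_Y_le_count R V N (X^~ w) (D w) i i_gt0 reach) _.
  apply: lee_nneseries => [s _ _|s _]; rewrite lee_fin // indicE.
  by case: eqP => // hit; rewrite mem_set //; left; apply/eqP.
rewrite integral_nneseries // => [|s]; last first.
  exact/measurable_EFinP/measurable_indic.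
under eq_eseriesr do rewrite integral_indic // setIT.
apply: le_trans (_ : \sum_(s <oo) (pr (visits_eq i.-1 s))%:E <= _).
  apply: lee_nneseries => [s _ _|s _]; first exact: measure_ge0.
  have : P (G s) <= P (visits_eq i.-1 s) + P (visits_bounded i.-1).
    apply: (@measureU2 _ _ _ P).
      exact: measurable_visits_eq.
    exact: measurable_visits_bounded.
  by rewrite visits_bounded_null adde0 -(prE P (measurable_visits_eq _ _)).
apply: lime_le; first by apply: is_cvg_nneseries => s _ _; rewrite lee_fin pr_ge0.
by apply: nearW => M; rewrite sumEFin lee_fin big_mkord; apply: sum_visits_eq_le.
Qed.

End water_filling_process.

Arguments expectation_wf_Y_le {R V N p eps qbar x0 dO O P D X A B}.

Theorem lemma9 (R : realType) (V : finType) (N : V -> {set V})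
  (p eps qbar : R) (x0 : V)
  (dΩ : measure_display) (Ω : measurableType dΩ) (P : probability Ω R)
  (D : Ω -> V) (X : nat -> Ω -> V) (A B : nat -> Ω -> bool) :
  (* finite connected undirected graph, closed neighborhoods *)
  (forall u v : V, (v \in N u) = (u \in N v)) ->
  (forall v : V, v \in N v) ->
  (forall u v : V, connect (nbhd_adj N) u v) ->
  (* Neighborhood Overlap with parameter p in (0,1] *)
  0 < p <= 1 -> neighborhood_overlap N p ->
  (* parameters of the model and of the Water-Filling Strategy *)
  0 <= eps < 1 -> 0 < qbar ->
  (* the random elements are measurable *)
  (forall v, measurable (D @^-1` [set v]%classic)) ->
  (forall t v, measurable (X t @^-1` [set v]%classic)) ->
  (forall t c, measurable (A t @^-1` [set c]%classic)) ->
  (forall t c, measurable (B t @^-1` [set c]%classic)) ->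
  (* (D, X, A, B) is generated by the Water-Filling Strategy from X_0 = x0 *)
  (forall (n : nat) (d : V) (x : nat -> V) (a b : nat -> bool),
     P [set w : Ω | D w = d /\ (forall t, (t <= n)%N -> X t w = x t) /\
                (forall t, (t < n)%N -> A t w = a t /\ B t w = b t)]
     = (wf_path_weight N eps qbar x0 d x a b n)%:E) ->
  forall i : nat, (1 <= i)%N ->
    (\int[P]_w wf_Y R N (fun t => X t w) (D w) i <= (p^-1)%:E)%E.
Proof.
move=> _ N_refl _ p01 overlap eps01 qbar_gt0 mD mX mA mB P_cyl i i_gt0.
exact: (expectation_wf_Y_le mD mX mA mB eps01 qbar_gt0 N_refl overlap p01 P_cyl i i_gt0).
Qed.
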